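(* Let $\mathcal{L}:\mathbb{R}^n\to\mathbb{R}$ be differentiable with $L$-Lipschitz gradient ($L>0$). Fix $\delta_0>0$, $\varepsilon\ge0$, $\eta_{\mathrm{FCM}}>0$. Let $\mathbf{x}_k\ne\mathbf{0}$ with $\mathbf{g}_k=\nabla\mathcal{L}(\mathbf{x}_k)\neq\mathbf{0}$, assume $\varepsilon\le L\|\mathbf{g}_k\|^2$ and that $\mathcal{L}$ is convex on the segment $[\mathbf{x}_k',\mathbf{x}_k]$, and let $\mathbf{x}_{k+1}$ be produced by one FCM step (as in the context). Then, with $c=\min\{\eta_{\mathrm{FCM}}/(2L),\,1/(8L)\}$, $$\mathcal{L}(\mathbf{x}_{k+1})\le\mathcal{L}(\mathbf{x}_k)-c\,\|\nabla\mathcal{L}(\mathbf{x}_k)\|^2.$$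
   Context: One FCM step from $\mathbf{x}_k$: $\mathbf{g}_k=\nabla\mathcal{L}(\mathbf{x}_k)$, $\delta_k=\delta_0\,\|\mathbf{x}_k\|/\|\mathbf{g}_k\|$, $\mathbf{x}_k'=\mathbf{x}_k-\delta_k\mathbf{g}_k$, $\mathbf{g}_k'=\nabla\mathcal{L}(\mathbf{x}_k')$, $\mathbf{h}_k=(\mathbf{g}_k-\mathbf{g}_k')/\delta_k$, $\alpha_k^{\mathrm{raw}}=\|\mathbf{g}_k\|^2/(\langle\mathbf{g}_k,\mathbf{h}_k\rangle+\varepsilon)$ (with $\alpha_k^{\mathrm{raw}}=+\infty$ if the denominator is $0$), $\alpha_k=\min\{\alpha_k^{\mathrm{raw}},1/L\}$. Single Armijo check: if $\mathcal{L}(\mathbf{x}_k-\alpha_k\mathbf{g}_k)>\mathcal{L}(\mathbf{x}_k)-\eta_{\mathrm{FCM}}\,\alpha_k\|\mathbf{g}_k\|^2$, replace $\alpha_k$ by $\alpha_k/2$ (once, with no further check). Then $\mathbf{x}_{k+1}=\mathbf{x}_k-\alpha_k\mathbf{g}_k$. *)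

From HB Require Import structures.
From mathcomp Require Import all_boot all_order all_algebra.
From mathcomp Require Import all_classical all_reals all_analysis.
Set Implicit Arguments. Unset Strict Implicit. Unset Printing Implicit Defensive.
Import Order.TTheory GRing.Theory Num.Theory.
Import numFieldNormedType.Exports.
Local Open Scope ring_scope.

Section FCM.
Variables (R : realType) (n : nat).
Implicit Types (u v x : 'rV[R]_n).

Definition dotp u v : R := \sum_(i < n) u 0 i * v 0 i.
Definition enorm v : R := Num.sqrt (dotp v v).

Definition is_gradient (f : 'rV[R]_n -> R) (grad : 'rV[R]_n -> 'rV[R]_n) :=
  forall x, differentiable f x /\ forall h, ('d f x : 'rV[R]_n -> R) h = dotp (grad x) h.

Definition lipschitz_grad (grad : 'rV[R]_n -> 'rV[R]_n) (L : R) :=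
  forall x y, enorm (grad x - grad y) <= L * enorm (x - y).

Definition convex_on_segment (f : 'rV[R]_n -> R) (a b : 'rV[R]_n) :=
  forall s1 s2 t : R, 0 <= s1 <= 1 -> 0 <= s2 <= 1 -> 0 <= t <= 1 ->
    let u := (1 - s1) *: a + s1 *: b in
    let v := (1 - s2) *: a + s2 *: b in
    f ((1 - t) *: u + t *: v) <= (1 - t) * f u + t * f v.

Variables (f : 'rV[R]_n -> R) (grad : 'rV[R]_n -> 'rV[R]_n) (L delta0 eps eta : R).

Definition fcm_delta x : R := delta0 * enorm x / enorm (grad x).
Definition fcm_xprime x : 'rV[R]_n := x - fcm_delta x *: grad x.
Definition fcm_h x : 'rV[R]_n :=
  (fcm_delta x)^-1 *: (grad x - grad (fcm_xprime x)).
(* alpha_k = min(alpha_raw, 1/L), with alpha_raw = +oo when the denominator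
   is 0 (so alpha_k = 1/L in that case). *)
Definition fcm_alpha0 x : R :=
  let den := dotp (grad x) (fcm_h x) + eps in
  if den == 0 then L^-1
  else Num.min (enorm (grad x) ^+ 2 / den) L^-1.
Definition fcm_alpha x : R :=
  let a := fcm_alpha0 x in
  if f (x - a *: grad x) > f x - eta * a * enorm (grad x) ^+ 2 then a / 2 else a.
Definition fcm_step x : 'rV[R]_n := x - fcm_alpha x *: grad x.

End FCM.

From HB Require Import structures.
From mathcomp Require Import all_boot all_order all_algebra.
From mathcomp Require Import all_classical all_reals all_analysis.
From mathcomp Require Import ring lra.
Import Order.TTheory GRing.Theory Num.Theory.
Import numFieldNormedType.Exports.
Local Open Scope ring_scope.

(** Convexity of the loss on [x', x] makes the gradient monotone along that
segment, so the finite-difference curvature <g, h> is nonnegative; the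
Lipschitz bound caps it by L |g|^2. With eps <= L |g|^2 the trial step
alpha_k therefore lies in [1/(2L), 1/L]. If the Armijo test passes, the
decrease is at least eta alpha_k |g|^2 >= eta/(2L) |g|^2; otherwise the halved
step alpha_k/2 <= 1/(2L) gives, by the descent lemma, a decrease of at least
alpha_k/4 |g|^2 >= 1/(8L) |g|^2. *)

Section InnerProduct.
Context {R : realType} {n : nat}.
Implicit Types u v w : 'rV[R]_n.

Lemma dotpC u v : dotp u v = dotp v u.
Proof. by apply: eq_bigr => i _; rewrite mulrC. Qed.

Lemma dotpDl u v w : dotp (u + v) w = dotp u w + dotp v w.
Proof. by rewrite /dotp -big_split; apply: eq_bigr => i _; rewrite !mxE mulrDl. Qed.

Lemma dotpZl k u w : dotp (k *: u) w = k * dotp u w.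
Proof. by rewrite /dotp mulr_sumr; apply: eq_bigr => i _; rewrite !mxE mulrA. Qed.

Lemma dotpNl u w : dotp (- u) w = - dotp u w.
Proof. by rewrite -scaleN1r dotpZl mulN1r. Qed.

Lemma dotpBl u v w : dotp (u - v) w = dotp u w - dotp v w.
Proof. by rewrite dotpDl dotpNl. Qed.

Lemma dotpZr k u w : dotp w (k *: u) = k * dotp w u.
Proof. by rewrite dotpC dotpZl dotpC. Qed.

Lemma dotpNr u w : dotp w (- u) = - dotp w u.
Proof. by rewrite dotpC dotpNl dotpC. Qed.

Lemma dotpBr u v w : dotp w (u - v) = dotp w u - dotp w v.
Proof. by rewrite dotpC dotpBl !(dotpC w). Qed.

Lemma dotpp_ge0 u : 0 <= dotp u u.
Proof. by apply: sumr_ge0 => i _; rewrite -expr2 sqr_ge0. Qed.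

Lemma dotpp_gt0 u : u != 0 -> 0 < dotp u u.
Proof.
move=> u_neq0; rewrite lt_def dotpp_ge0 andbT; apply: contra u_neq0 => /eqP u0.
apply/eqP/rowP => j; rewrite mxE; apply/eqP.
move: u0; rewrite /dotp => /eqP; rewrite psumr_eq0 => [|i _]; last first.
  by rewrite -expr2 sqr_ge0.
by move/allP/(_ j (mem_index_enum _)); rewrite mulf_eq0 orbb.
Qed.

Lemma enorm_ge0 u : 0 <= enorm u.
Proof. exact: sqrtr_ge0. Qed.

Lemma sqr_enorm u : enorm u ^+ 2 = dotp u u.
Proof. by rewrite /enorm sqr_sqrtr // dotpp_ge0. Qed.

(* Cauchy-Schwarz in disguise: expand [0 <= |K w - u|^2]. *)
Lemma dotp_le_of_dotpp_le K u w :
  0 < K -> dotp u u <= K ^+ 2 * dotp w w -> dotp u w <= K * dotp w w.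
Proof.
move=> K_gt0 uw; have := dotpp_ge0 (K *: w - u).
rewrite !(dotpBl, dotpBr, dotpZl, dotpZr) (dotpC w u) => expand.
have : 2 * K * dotp u w <= 2 * K * (K * dotp w w) by nra.
by rewrite ler_pM2l ?mulr_gt0.
Qed.

End InnerProduct.

Section LipschitzGradient.
Context {R : realType} {n : nat}.
Context {f : 'rV[R]_n -> R} {grad : 'rV[R]_n -> 'rV[R]_n} {L : R}.
Hypotheses (f_grad : is_gradient f grad) (grad_lip : lipschitz_grad grad L).
Hypothesis L_gt0 : 0 < L.
Implicit Types p u v w : 'rV[R]_n.

Lemma is_derive_along_line p w (t : R) :
  is_derive t 1 (fun s => f (s *: w + p)) (dotp (grad (t *: w + p)) w).
Proof.
have [df dfE] := f_grad (t *: w + p).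
have shift : (fun h : R => h^-1 *: (f ((h *: 1 + t) *: w + p) - f (t *: w + p)))
    = (fun h : R => h^-1 *: (f (h *: w + (t *: w + p)) - f (t *: w + p))).
  by apply: funext => h; rewrite [h *: 1]mulr1 scalerDl addrA.
apply: DeriveDef; first by rewrite /derivable shift; exact: diff_derivable.
by rewrite /derive shift -/(derive f _ w) deriveE // dfE.
Qed.

Lemma mvt_along_line p w (t : R) : 0 < t ->
  exists2 c, 0 < c < t & f (t *: w + p) - f p = t * dotp (grad (c *: w + p)) w.
Proof.
move=> t_gt0.
case: (@MVT R (fun s => f (s *: w + p))
  (fun c => dotp (grad (c *: w + p)) w) 0 t t_gt0).
- by move=> u _; exact: is_derive_along_line.
- apply: derivable_within_continuous => u _.
  by have [] := is_derive_along_line p w u.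
move=> c; rewrite in_itv /= => ct; rewrite scale0r add0r subr0 => ->.
by exists c; rewrite // mulrC.
Qed.

Lemma lipschitz_grad_sqr u v :
  dotp (grad u - grad v) (grad u - grad v) <= L ^+ 2 * dotp (u - v) (u - v).
Proof.
rewrite -!sqr_enorm -exprMn; apply: lerXn2r; rewrite ?nnegrE ?enorm_ge0 //.
exact: le_trans (enorm_ge0 _) (grad_lip u v).
Qed.

Lemma lipschitz_grad_dotp u v w c : 0 < c ->
  dotp (u - v) (u - v) = c ^+ 2 * dotp w w ->
  dotp (grad u - grad v) w <= L * c * dotp w w.
Proof.
move=> c_gt0 uv; apply: dotp_le_of_dotpp_le; first by rewrite mulr_gt0.
by apply: le_trans (lipschitz_grad_sqr u v) _; rewrite uv exprMn mulrA.
Qed.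

Lemma dotp_grad_le_of_secant_le p w D :
  (forall t, 0 < t <= 1 -> f (t *: w + p) - f p <= t * D) ->
  dotp (grad p) w <= D.
Proof.
move=> secant; apply/ler_addgt0Pr => e e_gt0.
set N := dotp w w; have N_ge0 : 0 <= N := dotpp_ge0 w.
set K := L * N + 1.
have K_gt0 : 0 < K by rewrite /K; have := mulr_ge0 (ltW L_gt0) N_ge0; lra.
set t := Num.min 1 (e / K).
have t_gt0 : 0 < t by rewrite lt_min ltr01 divr_gt0.
have t_le1 : t <= 1 by rewrite ge_min lexx.
have tK : t * K <= e by rewrite -ler_pdivlMr // ge_min lexx orbT.
have [c /andP[c_gt0 ct] mvt] := mvt_along_line p w t t_gt0.
have : dotp (grad (c *: w + p)) w <= D.
  by rewrite -(ler_pM2l t_gt0) -mvt secant ?t_gt0.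
have : dotp (grad p - grad (c *: w + p)) w <= L * c * N.
  apply: lipschitz_grad_dotp => //.
  by rewrite opprD addrCA subrr addr0 dotpNl dotpNr opprK dotpZl dotpZr mulrA.
have : L * c * N <= L * t * N by rewrite ler_wpM2r // ler_wpM2l ?ltW.
move: tK; rewrite dotpBl /K mulrDr mulr1 mulrA (mulrC t L); lra.
Qed.

Lemma convex_on_segment_chord {a b : 'rV[R]_n} (t : R) :
  convex_on_segment f a b -> 0 <= t <= 1 ->
  f ((1 - t) *: a + t *: b) <= (1 - t) * f a + t * f b /\
  f ((1 - t) *: b + t *: a) <= (1 - t) * f b + t * f a.
Proof.
move=> cvx t01; have h01 : 0 <= (0 : R) <= 1 by rewrite lexx ler01.
have h11 : 0 <= (1 : R) <= 1 by rewrite ler01 lexx.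
have := cvx 0 1 t h01 h11 t01; have := cvx 1 0 t h11 h01 t01.
by rewrite /= subr0 subrr !scale1r !scale0r addr0 add0r.
Qed.

(* Both endpoint gradients are bounded by the chord slope, in opposite
   directions; adding the two bounds gives monotonicity. *)
Lemma grad_monotone_on_convex_segment a b :
  convex_on_segment f a b -> 0 <= dotp (grad b - grad a) (b - a).
Proof.
move=> cvx.
have line u v (t : R) : (1 - t) *: u + t *: v = t *: (v - u) + u.
  by rewrite scalerBl scale1r scalerBr; apply/rowP => i; rewrite !mxE; ring.
have ab : dotp (grad a) (b - a) <= f b - f a.
  apply: dotp_grad_le_of_secant_le => t /andP[t_gt0 t_le1].
  have t01 : 0 <= t <= 1 by rewrite ltW.
  have [+ _] := convex_on_segment_chord t cvx t01.
  by rewrite line; lra.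
have ba : dotp (grad b) (a - b) <= f a - f b.
  apply: dotp_grad_le_of_secant_le => t /andP[t_gt0 t_le1].
  have t01 : 0 <= t <= 1 by rewrite ltW.
  have [_ +] := convex_on_segment_chord t cvx t01.
  by rewrite line; lra.
by move: ba; rewrite dotpBl -opprB dotpNr; lra.
Qed.

Lemma descent_lemma x (s : R) : 0 < s ->
  f (x - s *: grad x)
    <= f x - s * dotp (grad x) (grad x) + L * s ^+ 2 * dotp (grad x) (grad x).
Proof.
move=> s_gt0; set G := dotp (grad x) (grad x).
have -> : x - s *: grad x = s *: - grad x + x by rewrite scalerN addrC.
have [c /andP[c_gt0 cs] mvt] := mvt_along_line x (- grad x) s s_gt0.
have := lipschitz_grad_dotp (c *: - grad x + x) x (- grad x) c c_gt0.
rewrite addrK dotpZl dotpZr mulrA -expr2 dotpNl dotpNr opprK => /(_ erefl).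
rewrite dotpBl !dotpNr opprK -/G => lip.
have : L * c * G <= L * s * G by rewrite ler_wpM2r ?dotpp_ge0 // ler_wpM2l ?ltW.
move: mvt; rewrite dotpNr expr2 => mvt Lcs.
have : s * (G - L * s * G) <= s * dotp (grad (c *: - grad x + x)) (grad x).
  by rewrite ler_pM2l //; lra.
nra.
Qed.

Lemma halved_step_decrease x (a : R) : 0 < a -> a * L <= 1 ->
  f (x - (a / 2) *: grad x) <= f x - a / 4 * dotp (grad x) (grad x).
Proof.
move=> a_gt0 aL; set G := dotp (grad x) (grad x).
apply: le_trans (descent_lemma x (a / 2) _) _; first by rewrite divr_gt0.
have : 0 <= (1 - a * L) * (a / 4 * G).
  by rewrite mulr_ge0 ?subr_ge0 // mulr_ge0 ?dotpp_ge0 // divr_ge0 ?ltW.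
have -> : L * (a / 2) ^+ 2 * G = a * L * (a / 4 * G) by rewrite expr2; field.
have -> : a / 2 * G = 2 * (a / 4 * G) by field.
lra.
Qed.

Lemma armijo_once_decrease x (a eta : R) :
  0 < eta -> a * L <= 1 -> 1 <= a * (2 * L) ->
  f (x - (if f (x - a *: grad x) > f x - eta * a * enorm (grad x) ^+ 2
          then a / 2 else a) *: grad x)
    <= f x - Num.min (eta / (2 * L)) (8 * L)^-1 * enorm (grad x) ^+ 2.
Proof.
move=> eta_gt0 aL a2L; set G := enorm _ ^+ 2; set c := Num.min _ _.
have a_gt0 : 0 < a by rewrite -(pmulr_lgt0 _ (mulr_gt0 (ltr0Sn _ 1) L_gt0)); lra.
have G_ge0 : 0 <= G by rewrite /G sqr_enorm dotpp_ge0.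
case: ifP => [_ | /negbT]; last first.
  rewrite -leNgt => armijo; apply: le_trans armijo _.
  have c2L : c * (2 * L) <= eta by rewrite -ler_pdivlMr ?mulr_gt0 // ge_min lexx.
  suff : c <= eta * a by move=> ?; nra.
  rewrite -(ler_pM2r (mulr_gt0 (ltr0Sn _ 1) L_gt0)) -mulrA.
  by apply: le_trans c2L _; rewrite -{1}(mulr1 eta) ler_pM2l.
apply: le_trans (halved_step_decrease x a a_gt0 aL) _; rewrite -sqr_enorm -/G.
have c8L : c * (8 * L) <= 1.
  by rewrite -ler_pdivlMr ?mulr_gt0 // div1r ge_min lexx orbT.
suff : c <= a / 4 by move=> ?; nra.
rewrite -(ler_pM2r (mulr_gt0 (ltr0Sn _ 7) L_gt0)).
have -> : a / 4 * (8 * L) = a * (2 * L) by field.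
lra.
Qed.

End LipschitzGradient.

Section FCMStep.
Context {R : realType} {n : nat}.
Context {f : 'rV[R]_n -> R} {grad : 'rV[R]_n -> 'rV[R]_n} {L delta0 : R}.
Context {x : 'rV[R]_n}.
Hypotheses (f_grad : is_gradient f grad) (grad_lip : lipschitz_grad grad L).
Hypotheses (L_gt0 : 0 < L) (delta0_gt0 : 0 < delta0).
Hypotheses (x_neq0 : x != 0) (gx_neq0 : grad x != 0).

Local Notation delta := (fcm_delta grad delta0 x).
Local Notation x' := (fcm_xprime grad delta0 x).
Local Notation h := (fcm_h grad delta0 x).

Lemma fcm_delta_gt0 : 0 < delta.
Proof. by rewrite divr_gt0 ?mulr_gt0 // sqrtr_gt0 dotpp_gt0. Qed.

Lemma fcm_xprime_sub : x - x' = delta *: grad x.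
Proof. by rewrite opprB addrC subrK. Qed.

Lemma fcm_curvatureE :
  dotp (grad x) h = delta^-1 * dotp (grad x - grad x') (grad x).
Proof. by rewrite dotpZr dotpC. Qed.

Lemma fcm_curvature_ge0 :
  convex_on_segment f x' x -> 0 <= dotp (grad x) h.
Proof.
move=> cvx; have := grad_monotone_on_convex_segment f_grad grad_lip L_gt0 _ _ cvx.
rewrite fcm_xprime_sub dotpZr pmulr_rge0 ?fcm_delta_gt0 // => mono.
by rewrite fcm_curvatureE mulr_ge0 // invr_ge0 ltW ?fcm_delta_gt0.
Qed.

Lemma fcm_curvature_le : dotp (grad x) h <= L * dotp (grad x) (grad x).
Proof.
have := lipschitz_grad_dotp grad_lip L_gt0 x x' (grad x) _ fcm_delta_gt0.
rewrite fcm_xprime_sub dotpZl dotpZr mulrA -expr2 => /(_ erefl) lip.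
rewrite fcm_curvatureE ler_pdivrMl ?fcm_delta_gt0 //.
by rewrite mulrCA mulrA.
Qed.

(* The denominator [<g, h> + eps] of [alpha_raw] lies in [0, 2 L |g|^2]. *)
Lemma fcm_alpha0_bounds eps :
  0 <= dotp (grad x) h -> dotp (grad x) h <= L * dotp (grad x) (grad x) ->
  0 <= eps -> eps <= L * enorm (grad x) ^+ 2 ->
  let a := fcm_alpha0 grad L delta0 eps x in a * L <= 1 /\ 1 <= a * (2 * L).
Proof.
rewrite sqr_enorm => gh_ge0 gh_le eps_ge0 eps_le; rewrite /fcm_alpha0.
set G := dotp (grad x) (grad x) in gh_le eps_le *; set den := dotp _ _ + eps.
have G_gt0 : 0 < G by rewrite dotpp_gt0.
have den_ge0 : 0 <= den by rewrite addr_ge0.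
have den_le : den <= 2 * L * G by rewrite /den; lra.
case: ifP => [_ | /negbT den_neq0].
  by rewrite mulVf ?gt_eqF // mulrCA mulVf ?gt_eqF // mulr1; split => //; lra.
have den_gt0 : 0 < den by rewrite lt_def den_neq0.
split; first by rewrite -ler_pdivlMr // div1r ge_min lexx orbT.
rewrite -ler_pdivrMr ?mulr_gt0 // div1r le_min; apply/andP; split.
  rewrite sqr_enorm -/G ler_pdivlMr //; apply: le_trans (ler_wpM2l _ den_le) _.
    by rewrite invr_ge0 mulr_ge0 // ltW.
  by rewrite mulrA mulVf ?gt_eqF ?mulr_gt0 // mul1r.
by rewrite lef_pV2 ?posrE ?mulr_gt0 // ler_pMl // ler1n.
Qed.

End FCMStep.

Theorem mainTheorem3 (R : realType) (n : nat)
  (f : 'rV[R]_n -> R) (grad : 'rV[R]_n -> 'rV[R]_n)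
  (L delta0 eps eta : R) (x : 'rV[R]_n) :
  is_gradient f grad ->
  0 < L -> lipschitz_grad grad L ->
  0 < delta0 -> 0 <= eps -> 0 < eta ->
  x != 0 -> grad x != 0 ->
  eps <= L * enorm (grad x) ^+ 2 ->
  convex_on_segment f (fcm_xprime grad delta0 x) x ->
  f (fcm_step f grad L delta0 eps eta x)
    <= f x - Num.min (eta / (2 * L)) (8 * L)^-1 * enorm (grad x) ^+ 2.
Proof.
move=> f_grad L_gt0 grad_lip delta0_gt0 eps_ge0 eta_gt0 x_neq0 gx_neq0 eps_le cvx.
have gh_ge0 := fcm_curvature_ge0 f_grad grad_lip L_gt0 delta0_gt0 x_neq0 gx_neq0 cvx.
have gh_le := fcm_curvature_le grad_lip L_gt0 delta0_gt0 x_neq0 gx_neq0.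
have [aL a2L] := fcm_alpha0_bounds L_gt0 gx_neq0 eps gh_ge0 gh_le eps_ge0 eps_le.
exact: (armijo_once_decrease f_grad grad_lip L_gt0 x _ eta eta_gt0 aL a2L).
Qed.
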